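(* Let $k\ge2$ be an integer and $n\in\mathbb Z$. Then $L_k^{(n)}L_k^{(0)}=L_k^{(0)}L_k^{(n)}$.
   Context: Fix an integer $k\ge2$. Let $Q_k$ be the $k\times k$ matrix whose first row is all ones, with $(Q_k)_{i+1,i}=1$ for $1\le i\le k-1$ and all other entries $0$, and for $r\in\mathbb Z$ let $Q_k^r$ denote its $r$-th power. The generalized Lucas sequence of order $k$, $(l_{k,n})_{n\in\mathbb Z}$, is the two-sided sequence satisfying $l_{k,n+k}=l_{k,n+k-1}+\dots+l_{k,n}$ for all $n\in\mathbb Z$ with initial values $l_{k,r}=\operatorname{trace}(Q_k^r)$ for $0\le r\le k-1$ (so $l_{k,0}=k$ and $l_{k,r}=2^r-1$ for $1\le r\le k-1$). For $n\in\mathbb Z$ the generalized Lucas matrix $L_k^{(n)}$ is the $k\times k$ matrix with entries $(L_k^{(n)})_{i,1}=l_{k,k+n-i}$ and $(L_k^{(n)})_{i,j}=\sum_{m=n-i+j-1}^{k+n-i-1} l_{k,m}$ for $2\le j\le k$, $1\le i\le k$. *)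

From mathcomp Require Import all_boot all_order all_algebra.
Set Implicit Arguments. Unset Strict Implicit. Unset Printing Implicit Defensive.
Import GRing.Theory Num.Theory.
Local Open Scope ring_scope.

Definition Qmat (k : nat) : 'M[int]_k :=
  \matrix_(i < k, j < k) (if (i == 0%N :> nat) || (i == j.+1 :> nat) then 1 else 0).

Definition lucas_init (k : nat) : seq int := [seq \tr (Qmat k ^+ r) | r <- iota 0 k].

(* shift the window [l_n; ...; l_{n+k-1}] forward by one: append l_{n+k} = sum *)
Definition lucas_fwd (s : seq int) : seq int := rcons (behead s) (\sum_(x <- s) x).

(* shift backward by one: l_{n-1} = l_{n+k-1} - (l_n + ... + l_{n+k-2}) *)
Definition lucas_bwd (s : seq int) : seq int :=
  (last 0 s - \sum_(x <- belast 0 s) x) ::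
  take (size s).-1 s.
(* note: for s = a0::t, belast 0 s = 0 :: belast a0 t, whose sum is a0+...+a_{k-2} *)

Definition lucas (k : nat) (n : int) : int :=
  match n with
  | Posz m => head 0 (iter m lucas_fwd (lucas_init k))
  | Negz m => head 0 (iter m.+1 lucas_bwd (lucas_init k))
  end.

Definition lucas_mx (k : nat) (n : int) : 'M[int]_k :=
  \matrix_(i < k, j < k)
    (if j == 0%N :> nat then lucas k (n + k%:Z - i%:Z - 1)
     else \sum_(t < k - j) lucas k (n - i%:Z + j%:Z - 1 + t%:Z)).

(** Left and right multiplication by [Q_k] both shift the index of a
    generalized Lucas matrix: [Q_k L^(n) = L^(n+1) = L^(n) Q_k].  Hence
    [L^(m+p) = L^(m) Q_k^p] with [Q_k^p] commuting with [L^(m)], so any two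
    matrices of the family commute.  The shift identities only use the
    order-[k] recurrence, once every entry, the first column included, is read
    as a sum of [k - j] consecutive terms of the sequence. *)

From mathcomp Require Import all_boot all_order all_algebra zify.
Set Implicit Arguments. Unset Strict Implicit. Unset Printing Implicit Defensive.
Import Order.TTheory GRing.Theory Num.Theory.
Local Open Scope ring_scope.

Section ShiftCommute.
Variables (R : pzRingType) (f : int -> R) (q : R).
Hypotheses (fS : forall n, f (n + 1) = f n * q) (comm_qf : forall n, GRing.comm q (f n)).

Lemma shift_pow (n : int) (p : nat) : f (n + p%:Z) = f n * q ^+ p.
Proof.
elim: p => [|p IHp]; first by rewrite addr0 mulr1.
by rewrite -[p.+1]addn1 PoszD addrA fS IHp addn1 exprSr mulrA.
Qed.

Lemma comm_shift (m n : int) : GRing.comm (f m) (f n).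
Proof.
wlog le_mn : m n / m <= n.
  by move=> IH; case: (lerP m n) => [/IH // | /ltW/IH]; apply: commr_sym.
have -> : n = m + `|n - m|%N%:Z by rewrite gez0_abs ?subr_ge0 // addrCA subrr addr0.
rewrite shift_pow /GRing.comm -mulrA; congr (_ * _).
by apply: commrX; apply/commr_sym/comm_qf.
Qed.

End ShiftCommute.

Section CompanionMatrix.
Variables (k : nat) (f : nat -> nat -> int).

Lemma mulQmx (i j : 'I_k) :
  (Qmat k *m \matrix_(i < k, j < k) f i j) i j =
    if i == 0%N :> nat then \sum_(l < k) f l j else f i.-1 j.
Proof.
rewrite mxE; case: i => [[|i] lt_ik] /=.
  by apply: eq_bigr => l _; rewrite !mxE mul1r.
rewrite (bigD1 (Ordinal (ltnW lt_ik))) //= big1 => [|l ne_li].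
  by rewrite !mxE /= eqxx mul1r addr0.
rewrite !mxE /= eqSS; case: eqP => [eq_il|_]; last by rewrite mul0r.
by case/eqP: ne_li; apply: val_inj.
Qed.

Lemma mulmxQ (i j : 'I_k) :
  (\matrix_(i < k, j < k) f i j *m Qmat k) i j =
    f i 0%N + (if (j.+1 < k)%N then f i j.+1 else 0).
Proof.
have k_gt0 : (0 < k)%N by apply: leq_ltn_trans (ltn_ord i).
have Q_lj (l : 'I_k) : val l != 0%N -> Qmat k l j = (val l == j.+1)%:R.
  by move=> /negbTE l_ne0; rewrite mxE l_ne0; case: eqP.
rewrite mxE (bigD1 (Ordinal k_gt0)) //= [Qmat k _ j]mxE mxE mulr1; congr (_ + _).
case: ifP => [lt_j1k|ge_j1k].
  rewrite (bigD1 (Ordinal lt_j1k)) //= Q_lj // eqxx mulr1 mxE big1 ?addr0 //.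
  move=> l /andP[l_ne0 l_ne]; rewrite Q_lj //.
  by case: eqP => [eq_l|_]; [case/eqP: l_ne; apply: val_inj | rewrite mulr0].
apply: big1 => l l_ne0; rewrite Q_lj //.
by case: eqP => [eq_l|_]; [move: (ltn_ord l); rewrite eq_l ge_j1k | rewrite mulr0].
Qed.

End CompanionMatrix.

Section RecurrentSequence.
Variables (k : nat) (a : int -> int).
Hypothesis recurrence : forall m, a (m + k%:Z) = \sum_(t < k) a (m + t%:Z).

Definition window_sum (n : int) (i j : nat) : int :=
  \sum_(t < k - j) a (n - i%:Z + j%:Z - 1 + t%:Z).

Definition window_sum_mx (n : int) : 'M[int]_k :=
  \matrix_(i < k, j < k) window_sum n i j.

Lemma recurrence_backward (m : int) : \sum_(l < k) a (m - l%:Z) = a (m + 1).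
Proof.
rewrite (reindex_inj rev_ord_inj) /=.
have -> : m + 1 = (m + 1 - k%:Z) + k%:Z by rewrite subrK.
by rewrite recurrence; apply: eq_bigr => l _; congr a; have := ltn_ord l; lia.
Qed.

Lemma mulQ_window_sum_mx n : Qmat k *m window_sum_mx n = window_sum_mx (n + 1).
Proof.
apply/matrixP => i j; rewrite mulQmx mxE /window_sum.
case: i => [[|i] lt_ik] /=.
  rewrite exchange_big; apply: eq_bigr => t _.
  have -> : n + 1 - 0%N%:Z + j%:Z - 1 + t%:Z = (n + j%:Z - 1 + t%:Z) + 1 by lia.
  by rewrite -recurrence_backward; apply: eq_bigr => l _; congr a; lia.
by apply: eq_bigr => t _; congr a; lia.
Qed.

Lemma window_sum_mxQ n : window_sum_mx n *m Qmat k = window_sum_mx (n + 1).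
Proof.
apply/matrixP => i j; rewrite mulmxQ mxE /window_sum subn0.
have -> : \sum_(t < k) a (n - i%:Z + 0%N%:Z - 1 + t%:Z) = a (n - i%:Z - 1 + k%:Z).
  by rewrite recurrence; apply: eq_bigr => t _; congr a; lia.
have split_last : (k - j = (k - j.+1).+1)%N by have := ltn_ord j; lia.
rewrite split_last big_ord_recr /= addrC; congr (_ + _); first by congr a; lia.
case: ifP => [_ | /negbT]; first by apply: eq_bigr => t _; congr a; lia.
by rewrite -leqNgt -subn_eq0 => /eqP ->; rewrite big_ord0.
Qed.

End RecurrentSequence.

Lemma size_lucas_fwd (s : seq int) : s != [::] -> size (lucas_fwd s) = size s.
Proof. by case: s => //= x t _; rewrite size_rcons. Qed.

Lemma size_lucas_bwd (s : seq int) : s != [::] -> size (lucas_bwd s) = size s.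
Proof. by case: s => //= x t _; rewrite size_take /= ltnSn. Qed.

Lemma lucas_bwdK (s : seq int) : s != [::] -> lucas_fwd (lucas_bwd s) = s.
Proof.
case: s => //= x t _; rewrite /lucas_bwd /lucas_fwd /=.
have -> : take (size t) (x :: t) = belast x t.
  by elim: t x => [|y t IHt] x //=; rewrite IHt.
by rewrite !big_cons add0r subrK -lastI.
Qed.

Definition lucas_window (k : nat) (n : int) : seq int :=
  match n with
  | Posz m => iter m lucas_fwd (lucas_init k)
  | Negz m => iter m.+1 lucas_bwd (lucas_init k)
  end.

Lemma size_lucas_window k n : (0 < k)%N -> size (lucas_window k n) = k.
Proof.
move=> k_gt0; have size_init : size (lucas_init k) = k by rewrite size_map size_iota.
have nonempty (s : seq int) : size s = k -> s != [::].
  by move=> size_s; rewrite -size_eq0 size_s -lt0n.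
case: n => m; rewrite /lucas_window.
  elim: m => [|m IHm]; first exact: size_init.
  by rewrite iterS size_lucas_fwd // nonempty.
elim: m => [|m IHm]; rewrite iterS size_lucas_bwd // nonempty //.
Qed.

Lemma lucas_windowS k n : (0 < k)%N ->
  lucas_window k (n + 1) = lucas_fwd (lucas_window k n).
Proof.
move=> k_gt0; have nonempty m : lucas_window k m != [::].
  by rewrite -size_eq0 size_lucas_window // -lt0n.
case: n => [m|[|m]]; first by rewrite -[1]/(Posz 1) -PoszD addn1.
  by rewrite lucas_bwdK //; apply: (nonempty 0).
have -> : Negz m.+1 + 1 = Negz m by rewrite !NegzE; lia.
by rewrite [lucas_window k (Negz m.+1)]/= lucas_bwdK //; apply: (nonempty (Negz m)).
Qed.

Lemma lucas_nth_window k n t : (t < k)%N ->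
  lucas k (n + t%:Z) = nth 0 (lucas_window k n) t.
Proof.
move=> lt_tk; have k_gt0 : (0 < k)%N by apply: leq_ltn_trans lt_tk.
elim: t n lt_tk => [|t IHt] n lt_tk.
  by rewrite addr0; case: n => m /=; case: (iter _ _ _).
have -> : n + t.+1%:Z = (n + 1) + t%:Z by lia.
rewrite IHt ?(ltnW lt_tk) // lucas_windowS // /lucas_fwd.
rewrite nth_rcons size_behead size_lucas_window //.
have -> : (t < k.-1)%N by lia.
by rewrite nth_behead.
Qed.

Lemma lucas_recurrence k (m : int) : (0 < k)%N ->
  lucas k (m + k%:Z) = \sum_(t < k) lucas k (m + t%:Z).
Proof.
move=> k_gt0; have -> : m + k%:Z = (m + 1) + (k.-1)%:Z by lia.
rewrite lucas_nth_window ?prednK // ?ltn_predL // lucas_windowS // /lucas_fwd.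
rewrite nth_rcons size_behead size_lucas_window // ltnn eqxx.
rewrite (big_nth 0) size_lucas_window // big_mkord.
by apply: eq_bigr => t _; rewrite lucas_nth_window.
Qed.

Lemma lucas_mx_window_sum k n : (0 < k)%N ->
  lucas_mx k n = window_sum_mx k (lucas k) n.
Proof.
move=> k_gt0; apply/matrixP => i j; rewrite !mxE /window_sum.
case: eqP => // j0; rewrite j0 subn0.
rewrite (_ : _ + k%:Z - _ - _ = (n - i%:Z - 1) + k%:Z); last by lia.
by rewrite lucas_recurrence //; apply: eq_bigr => t _; congr lucas; lia.
Qed.

Theorem corollary1 (k : nat) (hk : (2 <= k)%N) (n : int) :
  lucas_mx k n *m lucas_mx k 0 = lucas_mx k 0 *m lucas_mx k n.
Proof.
have k_gt0 : (0 < k)%N by apply: leq_trans hk.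
have rec m := lucas_recurrence m k_gt0.
rewrite !lucas_mx_window_sum // !mulmxE.
apply: (comm_shift (q := Qmat k)) => m.
  by rewrite -mulmxE (window_sum_mxQ rec).
by rewrite /GRing.comm -!mulmxE (mulQ_window_sum_mx rec) (window_sum_mxQ rec).
Qed.
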